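(* Let $X$ be a directed graph, and let $X^0$ be the directed graph obtained from $X$ by adding an extra vertex $z$ and an edge from every vertex of $X^0$ to $z$. If $X$ is strongly $\delta$-hyperbolic then $X^0$ is strongly $\max(1,\delta)$-hyperbolic. Conversely, if $X^0$ is strongly $\delta$-hyperbolic then $X$ is strongly $\delta$-hyperbolic.
   Context: Directed graphs may have loops and multiple edges; $d(u,v)$ is the length of a shortest directed path from $u$ to $v$ ($\infty$ if none). Out-ball $\overrightarrow{\mathcal{B}}_r(x)=\{y : d(x,y)\le r\}$, in-ball $\overleftarrow{\mathcal{B}}_r(x)=\{y : d(y,x)\le r\}$, extended to sets by union. A path $[x_0,\dots,x_n]$ is a geodesic if $n=d(x_0,x_n)$. A directed geodesic triangle is an ordered triple $(p,q,r)$ of geodesics with the end of $p$ equal to the start of $q$ and $p\circ q$ having the same start and end as $r$; it is $\delta$-thin if every vertex of $r$ lies in $\overrightarrow{\mathcal{B}}_\delta(p)\cup\overleftarrow{\mathcal{B}}_\delta(q)$, every vertex of $p$ lies in $\overrightarrow{\mathcal{B}}_\delta(r)\cup\overleftarrow{\mathcal{B}}_\delta(q)$, and every vertex of $q$ lies in $\overrightarrow{\mathcal{B}}_\delta(p)\cup\overleftarrow{\mathcal{B}}_\delta(r)$. A directed graph is strongly $\delta$-hyperbolic if all its directed geodesic triangles are $\delta$-thin. *)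

From Stdlib Require Import Reals List.
Open Scope R_scope.

(* A directed graph (loops and multiple edges allowed; multiplicities are
   irrelevant for paths/distances) on a vertex type V, given by its
   adjacency relation: E x y means there is at least one edge x -> y. *)

(* A path [x0; x1; ...; xn] is represented by its start x0 and the list
   [x1; ...; xn]; its length is n = length xs, its end is last xs x0. *)
Fixpoint walk {V : Type} (E : V -> V -> Prop) (x : V) (xs : list V) : Prop :=
  match xs with
  | nil => True
  | y :: ys => E x y /\ walk E y ys
  end.

Definition path_end {V : Type} (x : V) (xs : list V) : V := last xs x.

Definition on_path {V : Type} (x : V) (xs : list V) (v : V) : Prop :=
  In v (x :: xs).

(* d(x,y) <= r   (d(x,y) = infinity if there is no directed path) *)
Definition dist_le {V : Type} (E : V -> V -> Prop) (x y : V) (r : R) : Prop :=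
  exists xs, walk E x xs /\ path_end x xs = y /\ INR (length xs) <= r.

Definition geodesic {V : Type} (E : V -> V -> Prop) (x : V) (xs : list V) : Prop :=
  walk E x xs /\
  forall ys, walk E x ys -> path_end x ys = path_end x xs ->
    (length xs <= length ys)%nat.

Definition in_out_ball_path {V : Type} (E : V -> V -> Prop) (r : R)
  (x : V) (xs : list V) (y : V) : Prop :=
  exists v, on_path x xs v /\ dist_le E v y r.

Definition in_in_ball_path {V : Type} (E : V -> V -> Prop) (r : R)
  (x : V) (xs : list V) (y : V) : Prop :=
  exists v, on_path x xs v /\ dist_le E y v r.

Definition geodesic_triangle {V : Type} (E : V -> V -> Prop)
  (p0 : V) (ps : list V) (q0 : V) (qs : list V) (r0 : V) (rs : list V) : Prop :=
  geodesic E p0 ps /\ geodesic E q0 qs /\ geodesic E r0 rs /\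
  path_end p0 ps = q0 /\ r0 = p0 /\ path_end r0 rs = path_end q0 qs.

Definition thin_triangle {V : Type} (E : V -> V -> Prop) (d : R)
  (p0 : V) (ps : list V) (q0 : V) (qs : list V) (r0 : V) (rs : list V) : Prop :=
  (forall v, on_path r0 rs v ->
     in_out_ball_path E d p0 ps v \/ in_in_ball_path E d q0 qs v) /\
  (forall v, on_path p0 ps v ->
     in_out_ball_path E d r0 rs v \/ in_in_ball_path E d q0 qs v) /\
  (forall v, on_path q0 qs v ->
     in_out_ball_path E d p0 ps v \/ in_in_ball_path E d r0 rs v).

Definition strongly_hyperbolic {V : Type} (E : V -> V -> Prop) (d : R) : Prop :=
  forall p0 ps q0 qs r0 rs,
    geodesic_triangle E p0 ps q0 qs r0 rs -> thin_triangle E d p0 ps q0 qs r0 rs.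

(* X^0: add a new vertex z (= None) and an edge from every vertex of X^0
   (including z itself) to z. *)
Definition cone_graph {V : Type} (E : V -> V -> Prop) : option V -> option V -> Prop :=
  fun a b =>
    match a, b with
    | Some u, Some v => E u v
    | _, None => True
    | None, Some _ => False
    end.

From Stdlib Require Import Reals List Lra Setoid.
Open Scope R_scope.

(* Paths of X^0 avoiding the apex z are exactly the images of paths of X, and
   from z one can only stay at z; so geodesics, distances and balls between
   vertices of X are the same in X and X^0, and a geodesic triangle of X^0 is
   either the image of one of X or has its last vertex at z.  In the second
   case every vertex is at distance at most 1 from z, which lies on q and on r,
   so the triangle is 1-thin. *)

Lemma path_end_cons {V : Type} (x a : V) (xs : list V) :
  path_end x (a :: xs) = path_end a xs.
Proof.
  revert x a; induction xs as [|b xs IH]; intros x a; [reflexivity|].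
  change (path_end x (b :: xs) = path_end a (b :: xs)); now rewrite !IH.
Qed.

Lemma path_end_map {A B : Type} (f : A -> B) (x : A) (xs : list A) :
  path_end (f x) (map f xs) = f (path_end x xs).
Proof.
  revert x; induction xs as [|a xs IH]; intros x; [reflexivity|].
  simpl map; now rewrite !path_end_cons.
Qed.

Lemma path_end_on_path {V : Type} (x : V) (xs : list V) :
  on_path x xs (path_end x xs).
Proof.
  revert x; induction xs as [|a xs IH]; intros x; [now left|].
  rewrite path_end_cons; right; apply IH.
Qed.

Lemma dist_le_mono {V : Type} (E : V -> V -> Prop) x y r r' :
  r <= r' -> dist_le E x y r -> dist_le E x y r'.
Proof. intros Hr (xs & Hw & He & Hl); exists xs; repeat split; auto; lra. Qed.

Lemma in_out_ball_path_mono {V : Type} (E : V -> V -> Prop) r r' x xs y :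
  r <= r' -> in_out_ball_path E r x xs y -> in_out_ball_path E r' x xs y.
Proof. intros Hr (v & Hv & Hd); exists v; split; [|apply (dist_le_mono _ _ _ r)]; auto. Qed.

Lemma in_in_ball_path_mono {V : Type} (E : V -> V -> Prop) r r' x xs y :
  r <= r' -> in_in_ball_path E r x xs y -> in_in_ball_path E r' x xs y.
Proof. intros Hr (v & Hv & Hd); exists v; split; [|apply (dist_le_mono _ _ _ r)]; auto. Qed.

Lemma thin_triangle_mono {V : Type} (E : V -> V -> Prop) d d' p0 ps q0 qs r0 rs :
  d <= d' -> thin_triangle E d p0 ps q0 qs r0 rs -> thin_triangle E d' p0 ps q0 qs r0 rs.
Proof.
  intros Hd (Hr & Hp & Hq); repeat split; intros v Hv;
    [destruct (Hr v Hv) | destruct (Hp v Hv) | destruct (Hq v Hv)];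
    solve [left; eapply in_out_ball_path_mono; eauto
          | right; eapply in_in_ball_path_mono; eauto].
Qed.

Section ConeGraph.

Variables (V : Type) (E : V -> V -> Prop).

Notation E0 := (cone_graph E).

Lemma walk_cone_map_Some x xs : walk E0 (Some x) (map Some xs) <-> walk E x xs.
Proof.
  revert x; induction xs as [|a xs IH]; intros x; simpl; [tauto|].
  now rewrite IH.
Qed.

Lemma walk_cone_avoiding_apex a ys y :
  walk E0 a ys -> path_end a ys = Some y ->
  exists x xs, a = Some x /\ ys = map Some xs /\ walk E x xs.
Proof.
  revert a; induction ys as [|b ys IH]; intros a Hw He.
  - exists y, nil; simpl; auto.
  - destruct Hw as [Hab Hw]; rewrite path_end_cons in He.
    destruct (IH b Hw He) as (x & xs & -> & -> & Hxs).
    destruct a as [a|]; [|destruct Hab].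
    exists a, (x :: xs); simpl; auto.
Qed.

Lemma dist_le_cone_Some u v r : dist_le E0 (Some u) (Some v) r <-> dist_le E u v r.
Proof.
  split.
  - intros (ys & Hw & He & Hl).
    destruct (walk_cone_avoiding_apex _ _ _ Hw He) as (x & xs & Hx & -> & Hxs).
    injection Hx as <-; rewrite path_end_map in He; injection He as He.
    rewrite length_map in Hl; exists xs; auto.
  - intros (xs & Hw & He & Hl); exists (map Some xs).
    rewrite walk_cone_map_Some, path_end_map, He, length_map; auto.
Qed.

Lemma dist_le_cone_to_apex w r : 1 <= r -> dist_le E0 w None r.
Proof.
  intros Hr; exists (None :: nil).
  destruct w; repeat split; simpl length; rewrite ?INR_1; auto.
Qed.

Lemma geodesic_cone_map_Some x xs :
  geodesic E0 (Some x) (map Some xs) <-> geodesic E x xs.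
Proof.
  unfold geodesic; rewrite walk_cone_map_Some; split; intros [Hw Hmin]; split; auto.
  - intros ys Hys He; specialize (Hmin (map Some ys)).
    rewrite walk_cone_map_Some, !path_end_map, He, !length_map in Hmin; auto.
  - intros ys Hys He; rewrite path_end_map in He.
    destruct (walk_cone_avoiding_apex _ _ _ Hys He) as (x' & zs & Hx & -> & Hzs).
    injection Hx as <-; rewrite path_end_map in He; injection He as He.
    rewrite !length_map; auto.
Qed.

Lemma forall_on_path_map_Some (P : option V -> Prop) x xs :
  (forall w, on_path (Some x) (map Some xs) w -> P w) <->
  (forall v, on_path x xs v -> P (Some v)).
Proof.
  unfold on_path; change (Some x :: map Some xs) with (map Some (x :: xs)).
  split; intros H.
  - intros v Hv; apply H, in_map, Hv.
  - intros w Hw; apply in_map_iff in Hw; destruct Hw as (v & <- & Hv); auto.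
Qed.

Lemma exists_on_path_map_Some (P : option V -> Prop) x xs :
  (exists w, on_path (Some x) (map Some xs) w /\ P w) <->
  (exists v, on_path x xs v /\ P (Some v)).
Proof.
  unfold on_path; change (Some x :: map Some xs) with (map Some (x :: xs)).
  split.
  - intros (w & Hw & HP); apply in_map_iff in Hw; destruct Hw as (v & <- & Hv); eauto.
  - intros (v & Hv & HP); exists (Some v); split; auto; apply in_map, Hv.
Qed.

Lemma in_out_ball_path_cone_Some r x xs v :
  in_out_ball_path E0 r (Some x) (map Some xs) (Some v) <-> in_out_ball_path E r x xs v.
Proof.
  unfold in_out_ball_path; rewrite exists_on_path_map_Some.
  now setoid_rewrite dist_le_cone_Some.
Qed.

Lemma in_in_ball_path_cone_Some r x xs v :
  in_in_ball_path E0 r (Some x) (map Some xs) (Some v) <-> in_in_ball_path E r x xs v.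
Proof.
  unfold in_in_ball_path; rewrite exists_on_path_map_Some.
  now setoid_rewrite dist_le_cone_Some.
Qed.

Lemma geodesic_triangle_cone_Some p0 ps q0 qs r0 rs :
  geodesic_triangle E0 (Some p0) (map Some ps) (Some q0) (map Some qs)
    (Some r0) (map Some rs) <->
  geodesic_triangle E p0 ps q0 qs r0 rs.
Proof.
  unfold geodesic_triangle; rewrite !geodesic_cone_map_Some, !path_end_map.
  intuition congruence.
Qed.

Lemma thin_triangle_cone_Some d p0 ps q0 qs r0 rs :
  thin_triangle E0 d (Some p0) (map Some ps) (Some q0) (map Some qs)
    (Some r0) (map Some rs) <->
  thin_triangle E d p0 ps q0 qs r0 rs.
Proof.
  unfold thin_triangle; rewrite !forall_on_path_map_Some.
  setoid_rewrite in_out_ball_path_cone_Some.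
  setoid_rewrite in_in_ball_path_cone_Some.
  reflexivity.
Qed.

Lemma geodesic_triangle_cone_avoiding_apex p0 ps q0 qs r0 rs y :
  geodesic_triangle E0 p0 ps q0 qs r0 rs -> path_end r0 rs = Some y ->
  exists p0' ps' q0' qs' rs',
    p0 = Some p0' /\ ps = map Some ps' /\ q0 = Some q0' /\ qs = map Some qs' /\
    r0 = Some p0' /\ rs = map Some rs'.
Proof.
  intros ((Hp & _) & (Hq & _) & (Hr & _) & Hpq & -> & Hend) Hy.
  destruct (walk_cone_avoiding_apex _ _ _ Hr Hy) as (p0' & rs' & -> & -> & _).
  rewrite Hy in Hend; symmetry in Hend.
  destruct (walk_cone_avoiding_apex _ _ _ Hq Hend) as (q0' & qs' & -> & -> & _).
  destruct (walk_cone_avoiding_apex _ _ _ Hp Hpq) as (p0'' & ps' & Hp0 & -> & _).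
  injection Hp0 as <-.
  exists p0', ps', q0', qs', rs'; repeat split.
Qed.

Lemma thin_triangle_cone_to_apex d p0 ps q0 qs r0 rs :
  1 <= d -> geodesic_triangle E0 p0 ps q0 qs r0 rs -> path_end r0 rs = None ->
  thin_triangle E0 d p0 ps q0 qs r0 rs.
Proof.
  intros Hd (_ & _ & _ & _ & _ & Hend) Hr.
  repeat split; intros v _; right.
  - exists (path_end q0 qs); split; [apply path_end_on_path|].
    rewrite <- Hend, Hr; apply dist_le_cone_to_apex, Hd.
  - exists (path_end q0 qs); split; [apply path_end_on_path|].
    rewrite <- Hend, Hr; apply dist_le_cone_to_apex, Hd.
  - exists (path_end r0 rs); split; [apply path_end_on_path|].
    rewrite Hr; apply dist_le_cone_to_apex, Hd.
Qed.

End ConeGraph.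

Theorem proposition2p6 (V : Type) (E : V -> V -> Prop) (delta : R) :
  (strongly_hyperbolic E delta ->
     strongly_hyperbolic (cone_graph E) (Rmax 1 delta)) /\
  (strongly_hyperbolic (cone_graph E) delta ->
     strongly_hyperbolic E delta).
Proof.
  split.
  - intros Hhyp p0 ps q0 qs r0 rs Htri.
    destruct (path_end r0 rs) as [y|] eqn:Hy.
    + destruct (geodesic_triangle_cone_avoiding_apex _ _ _ _ _ _ _ _ _ Htri Hy)
        as (p0' & ps' & q0' & qs' & rs' & -> & -> & -> & -> & -> & ->).
      apply thin_triangle_cone_Some, (thin_triangle_mono _ delta); [apply Rmax_r|].
      apply Hhyp, geodesic_triangle_cone_Some, Htri.
    + apply thin_triangle_cone_to_apex; auto using Rmax_l.
  - intros Hhyp p0 ps q0 qs r0 rs Htri.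
    apply thin_triangle_cone_Some, Hhyp, geodesic_triangle_cone_Some, Htri.
Qed.
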